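(* For generic $u\in\mathbb{C}$ and generic $v,w\in\mathbb{C}$ (in particular with all entries defined), the following commutation relations hold: $$[M^{cl}(v),M^{cl}(w)]=0,\qquad [M^{q}(v),M^{q}(w)]=0 .$$
   Context: All matrices are $2N\times 2N$ complex matrices, indexed by $1,\dots,2N$. Entries not listed are zero, and only index pairs lying in $\{1,\dots,2N\}^2$ are meant. Here $\mathrm{i}$ is the imaginary unit, $\lambda_{cl}(v)=\tanh(v)\coth(u-v)$ and $\lambda_q(v)=\tanh(u-v)\coth(v)$. In all formulas $1\le i\le N$, $1\le j\le 2N$ and $k\ge 1$. The matrix $M^{cl}(v)$ is lower triangular, with entries - $M^{cl}_{2i-1,2i-1}=-\mathrm{i}\coth(u-v)$ and $M^{cl}_{2i,2i}=\mathrm{i}\tanh(v)$; - $M^{cl}_{2i-1+2k,\,2i-1}=-\mathrm{i}\,\lambda_{cl}^{k-1}/(\coth(v)\sinh^2(u-v))$; - $M^{cl}_{2i+2k,\,2i}=-\mathrm{i}\,\lambda_{cl}^{k-1}/(\tanh(u-v)\cosh^2(v))$; - $M^{cl}_{j+2k-1,\,j}=-\mathrm{i}\,\lambda_{cl}^{k-1}/(\cosh(v)\sinh(u-v))$. The matrix $M^{q}(v)$ is upper triangular, with entries - $M^{q}_{2i-1,2i-1}=-\mathrm{i}\tanh(u-v)$ and $M^{q}_{2i,2i}=\mathrm{i}\coth(v)$; - $M^{q}_{2i-1,\,2i-1+2k}=\mathrm{i}\,\lambda_q^{k-1}/(\tanh(v)\cosh^2(u-v))$; - $M^{q}_{2i,\,2i+2k}=\mathrm{i}\,\lambda_q^{k-1}/(\coth(u-v)\sinh^2(v))$;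 - $M^{q}_{j,\,j+2k-1}=\mathrm{i}\,\lambda_q^{k-1}/(\sinh(v)\cosh(u-v))$. The matrices $M^{cl}(w)$ and $M^{q}(w)$ are defined by the same formulas with $v$ replaced by $w$. *)

From mathcomp Require Import all_boot all_algebra.
From mathcomp Require Import complex.
From mathcomp Require Import reals.
From mathcomp.analysis Require Import sequences exp trigo.
Set Implicit Arguments. Unset Strict Implicit. Unset Printing Implicit Defensive.
Import GRing.Theory Num.Theory.
Local Open Scope ring_scope.
Local Open Scope complex_scope.

Section Hyperbolic.
Variable R : realType.

Definition cexp (z : R[i]) : R[i] :=
  let: a +i* b := z in (expR a)%:C * ((cos b)%:C + 'i * (sin b)%:C).

Definition csinh (z : R[i]) : R[i] := (cexp z - cexp (- z)) / 2%:R.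
Definition ccosh (z : R[i]) : R[i] := (cexp z + cexp (- z)) / 2%:R.
Definition ctanh (z : R[i]) : R[i] := csinh z / ccosh z.
Definition ccoth (z : R[i]) : R[i] := ccosh z / csinh z.

Definition lam_cl (u v : R[i]) : R[i] := ctanh v * ccoth (u - v).
Definition lam_q  (u v : R[i]) : R[i] := ctanh (u - v) * ccoth v.

(* entries with 1-based row index r and column index c *)
Definition Mcl_entry (u v : R[i]) (r c : nat) : R[i] :=
  if r == c then
    (if odd c then - 'i * ccoth (u - v) else 'i * ctanh v)
  else if (c < r)%N then
    let d := (r - c)%N in
    if odd d then (* d = 2k-1, k-1 = d./2 *)
      - 'i * lam_cl u v ^+ (d./2) / (ccosh v * csinh (u - v))
    else if odd c then (* d = 2k, c = 2i-1, k-1 = (d./2).-1 *)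
      - 'i * lam_cl u v ^+ (d./2).-1 / (ccoth v * csinh (u - v) ^+ 2)
    else
      - 'i * lam_cl u v ^+ (d./2).-1 / (ctanh (u - v) * ccosh v ^+ 2)
  else 0.

Definition Mq_entry (u v : R[i]) (r c : nat) : R[i] :=
  if r == c then
    (if odd r then - 'i * ctanh (u - v) else 'i * ccoth v)
  else if (r < c)%N then
    let d := (c - r)%N in
    if odd d then
      'i * lam_q u v ^+ (d./2) / (csinh v * ccosh (u - v))
    else if odd r then
      'i * lam_q u v ^+ (d./2).-1 / (ctanh v * ccosh (u - v) ^+ 2)
    else
      'i * lam_q u v ^+ (d./2).-1 / (ccoth (u - v) * csinh v ^+ 2)
  else 0.

(* 2N x 2N matrices; ordinal a : 'I_(2N) corresponds to the 1-based index a+1 *)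
Definition Mcl (N : nat) (u v : R[i]) : 'M[R[i]]_(2 * N) :=
  \matrix_(a, b) Mcl_entry u v a.+1 b.+1.
Definition Mq (N : nat) (u v : R[i]) : 'M[R[i]]_(2 * N) :=
  \matrix_(a, b) Mq_entry u v a.+1 b.+1.

End Hyperbolic.

(* Up to transposition, both matrices are lower triangular, and the entry at
   distance d below the diagonal depends only on d and on the parity p of its
   column: it is x(p) on the diagonal, l^k s at distance 2k+1 and l^k y(p) at
   distance 2k+2.  The entries of a product of two such matrices again depend
   only on (d, p), through a convolution.  For even d this convolution is
   symmetric in the two factors for free.  For odd d = 2m+1 the difference of
   the two orders is, up to a sign, k s1 s2 ((l1^m - l2^m) - (l1 - l2) G) with
   G = sum_(i<m) l1^(m-1-i) l2^i, which vanishes, provided both matrices have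
   parity jumps x(1) - x(0) = k s and y(1) - y(0) = k s (l - 1) with the same
   constant k.  For M^cl(v) one gets k = -cosh u and for M^q(v) k = cosh u,
   independently of v; these are rational identities in e^(u-v) and e^v. *)

From mathcomp Require Import all_boot all_algebra.
From mathcomp Require Import complex reals.
From mathcomp.analysis Require Import sequences exp trigo.
From mathcomp Require Import ring zify.
Import GRing.Theory Num.Theory.
Local Open Scope ring_scope.

Lemma sum_nat_pairs (V : nmodType) (f : nat -> V) m :
  \sum_(0 <= j < m.*2) f j = \sum_(0 <= i < m) (f i.*2 + f i.*2.+1).
Proof.
elim: m => [|m IH]; first by rewrite !big_geq.
by rewrite doubleS !big_nat_recr //= IH addrA.
Qed.

Section Profiles.
Context {K : comPzRingType}.
Implicit Types (F G : nat -> bool -> K) (x y : bool -> K) (s l : K).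

Definition profile x y s l (d : nat) (p : bool) : K :=
  if d is 0 then x p else if odd d then l ^+ d./2 * s else l ^+ d./2.-1 * y p.

Lemma profile_odd x y s l k p : profile x y s l k.*2.+1 p = l ^+ k * s.
Proof. by rewrite /profile /= odd_double uphalf_double. Qed.

Lemma profile_even x y s l k p : profile x y s l k.+1.*2 p = l ^+ k * y p.
Proof. by rewrite /profile doubleS /= odd_double doubleK. Qed.

Lemma profile_odd_indep x y s l d p q :
  odd d -> profile x y s l d p = profile x y s l d q.
Proof. by move=> od; rewrite -(odd_double_half d) od add1n !profile_odd. Qed.

Definition pconv F G (d : nat) (p : bool) : K :=
  \sum_(0 <= j < d.+1) F (d - j)%N (p (+) odd j) * G j p.

Lemma pconv_rev F G d p :
  pconv G F d p = \sum_(0 <= j < d.+1) F (d - j)%N p * G j (p (+) odd (d - j)).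
Proof.
rewrite /pconv big_nat_rev /= add0n.
by apply: eq_big_nat => j /andP[_ jd]; rewrite subSS subKn // mulrC.
Qed.

Lemma geo_sumC (a b : K) m :
  \sum_(i < m) a ^+ (m.-1 - i) * b ^+ i = \sum_(i < m) b ^+ (m.-1 - i) * a ^+ i.
Proof.
case: m => [|m]; first by rewrite !big_ord0.
rewrite (reindex_inj rev_ord_inj) /=; apply: eq_bigr => i _.
by rewrite subSS subKn 1?mulrC // -ltnS.
Qed.

Lemma pconv_profile_evenC x1 y1 s1 l1 x2 y2 s2 l2 m p :
  pconv (profile x1 y1 s1 l1) (profile x2 y2 s2 l2) m.*2 p =
  pconv (profile x2 y2 s2 l2) (profile x1 y1 s1 l1) m.*2 p.
Proof.
rewrite pconv_rev; apply: eq_big_nat => j /andP[_ jd].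
rewrite (oddN (odd_double m) jd).
have [oj|_] := boolP (odd j); last by rewrite addbF.
have od : odd (m.*2 - j) by rewrite (oddN (odd_double m) jd).
rewrite (profile_odd_indep _ _ _ _ _ _ p od).
by rewrite (profile_odd_indep _ _ _ _ _ p (p (+) true) oj).
Qed.

Section OddConvolution.
Variables (x1 y1 x2 y2 : bool -> K) (s1 l1 s2 l2 : K).
Local Notation F1 := (profile x1 y1 s1 l1).
Local Notation F2 := (profile x2 y2 s2 l2).

Lemma pconv_profile_odd m p :
  pconv F1 F2 m.*2.+1 p = s1 * l1 ^+ m * x2 p + s2 * l2 ^+ m * x1 (~~ p)
    + (\sum_(i < m) l1 ^+ (m.-1 - i) * l2 ^+ i) * (s1 * y2 p + s2 * y1 (~~ p)).
Proof.
rewrite /pconv -(doubleS m) sum_nat_pairs.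
under eq_big_nat => i /andP[_ im].
  rewrite subSn ?leq_double // -doubleB subSS -doubleB oddS odd_double addbF addbT.
  rewrite !profile_odd.
  over.
rewrite big_split big_nat_recl // big_nat_recr // !subn0 subnn.
under eq_big_nat => i _ do rewrite profile_even subnS predn_sub.
rewrite /=.
under [X in _ + (X + _)]eq_big_nat => i /andP[_ im].
  have -> : (m - i = (m.-1 - i).+1)%N by rewrite -predn_sub prednK ?subn_gt0.
  rewrite profile_even.
  over.
rewrite [X in _ + X = _]addrC addrACA -big_split /= big_mkord mulr_suml.
by congr (_ + _); [ring | apply: eq_bigr => i _; ring].
Qed.
End OddConvolution.

Definition parity_jumps (k : K) x y s l :=
  x true - x false = k * s /\ y true - y false = k * s * (l - 1).

Lemma pconv_profileC k x1 y1 s1 l1 x2 y2 s2 l2 :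
  parity_jumps k x1 y1 s1 l1 -> parity_jumps k x2 y2 s2 l2 -> forall d p,
  pconv (profile x1 y1 s1 l1) (profile x2 y2 s2 l2) d p =
  pconv (profile x2 y2 s2 l2) (profile x1 y1 s1 l1) d p.
Proof.
move=> [hx1 hy1] [hx2 hy2] d p.
have [od|ev] := boolP (odd d); last first.
  by rewrite -(odd_double_half d) (negbTE ev) add0n pconv_profile_evenC.
rewrite -(odd_double_half d) od add1n; move: d./2 => m.
rewrite !pconv_profile_odd (geo_sumC l2 l1); set geo := \sum_(i < m) _.
have eX : l1 ^+ m = l2 ^+ m + (l1 - l2) * geo by rewrite -subrXX addrC subrK.
have ex1 : x1 true = x1 false + k * s1 by rewrite -hx1 addrC subrK.
have ex2 : x2 true = x2 false + k * s2 by rewrite -hx2 addrC subrK.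
have ey1 : y1 true = y1 false + k * s1 * (l1 - 1) by rewrite -hy1 addrC subrK.
have ey2 : y2 true = y2 false + k * s2 * (l2 - 1) by rewrite -hy2 addrC subrK.
by rewrite eX; case: p; rewrite /= ex1 ex2 ey1 ey2; ring.
Qed.

Definition lower_profile_mx n F : 'M[K]_n :=
  \matrix_(a, b) if (b <= a)%N then F (a - b)%N (odd b) else 0.

Lemma mul_lower_profile_mx n F G (a b : 'I_n) :
  (lower_profile_mx n F *m lower_profile_mx n G) a b =
  if (b <= a)%N then pconv F G (a - b) (odd b) else 0.
Proof.
pose f j := (if (j <= a)%N then F (a - j)%N (odd j) else 0) *
            (if (b <= j)%N then G (j - b)%N (odd b) else 0).
have f_out j : (j < b)%N || (a < j)%N -> f j = 0.
  by rewrite /f; case: leqP; case: leqP; rewrite ?mulr0 ?mul0r //; lia.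
rewrite mxE (eq_bigr (fun j : 'I_n => f j)) => [|j _]; last by rewrite !mxE.
rewrite -(big_mkord xpredT f); case: leqP => [ba|ab]; last first.
  by rewrite big_nat_cond big1 // => j _; apply: f_out; lia.
have bn := ltnW (ltn_ord b); have an := ltn_ord a.
rewrite (big_cat_nat (n := a.+1)) // (big_cat_nat (n := b)) ?leqW //=.
rewrite [X in X + _ + _]big_nat_cond big1; last first.
  by move=> j /andP[/andP[_ jb] _]; apply: f_out; lia.
rewrite [X in _ + X]big_nat_cond [X in _ + X]big1; last first.
  by move=> j /andP[/andP[aj _] _]; apply: f_out; lia.
rewrite add0r addr0 (big_addn 0 _ b) subSn //; apply: eq_big_nat => j /andP[_ jab].
by rewrite /f oddD addbC addnK [(j + b)%N]addnC subnDA !ifT //; lia.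
Qed.

Lemma lower_profile_mxC n F G : (forall d p, pconv F G d p = pconv G F d p) ->
  lower_profile_mx n F *m lower_profile_mx n G =
  lower_profile_mx n G *m lower_profile_mx n F.
Proof. by move=> FG; apply/matrixP => a b; rewrite !mul_lower_profile_mx FG. Qed.
End Profiles.

Arguments pconv_profileC {K k x1 y1 s1 l1 x2 y2 s2 l2}.
Arguments lower_profile_mxC {K n F G}.

Section Hyperbolic.
Context {R : realType}.
Implicit Types u v z : R[i].
Local Open Scope complex_scope.

Lemma cexpD u v : cexp (u + v) = cexp u * cexp v.
Proof.
case: u => a1 b1; case: v => a2 b2 /=.
rewrite expRD cosD sinD !(rmorphD, rmorphB, rmorphN, rmorphM).
have ii : 'i * 'i = -1 :> R[i] by rewrite -expr2 sqr_i.
set e1 := (expR a1)%:C; set e2 := (expR a2)%:C.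
set c1 := (cos b1)%:C; set c2 := (cos b2)%:C.
set s1 := (sin b1)%:C; set s2 := (sin b2)%:C.
transitivity (e1 * e2 * (c1 * c2 + ('i * 'i) * (s1 * s2) + 'i * (s1 * c2 + c1 * s2))).
  by rewrite ii mulN1r.
ring.
Qed.

Lemma cexp0 : cexp (0 : R[i]) = 1.
Proof. by rewrite /cexp /= expR0 cos0 sin0 mulr0 addr0 mulr1. Qed.

Lemma cexpNK z : cexp (- z) * cexp z = 1.
Proof. by rewrite -cexpD addNr cexp0. Qed.

Lemma cexp_neq0 z : cexp z != 0.
Proof.
apply/negP => /eqP ez; have := cexpNK z.
by rewrite ez mulr0 => /eqP; rewrite eq_sym oner_eq0.
Qed.

Lemma cexpN z : cexp (- z) = (cexp z)^-1.
Proof. by rewrite -[LHS]mulr1 -(divff (cexp_neq0 z)) mulrA cexpNK mul1r. Qed.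

Lemma csinhE z : csinh z = (cexp z ^+ 2 - 1) / (2 * cexp z).
Proof. by rewrite /csinh cexpN; field; rewrite cexp_neq0. Qed.

Lemma ccoshE z : ccosh z = (cexp z ^+ 2 + 1) / (2 * cexp z).
Proof. by rewrite /ccosh cexpN; field; rewrite cexp_neq0. Qed.

Lemma csinh_neq0 z : (csinh z != 0) = (cexp z ^+ 2 - 1 != 0).
Proof.
by rewrite csinhE mulf_eq0 invr_eq0 mulf_eq0 pnatr_eq0 (negbTE (cexp_neq0 z)) /= orbF.
Qed.

Lemma ccosh_neq0 z : (ccosh z != 0) = (cexp z ^+ 2 + 1 != 0).
Proof.
by rewrite ccoshE mulf_eq0 invr_eq0 mulf_eq0 pnatr_eq0 (negbTE (cexp_neq0 z)) /= orbF.
Qed.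

(* Profile data of [Mcl N u v] and of the transpose of [Mq N u v]; [p] is the
   parity of the 0-based column index, i.e. [p = true] for the even 1-based
   columns of [Mcl] (rows of [Mq]). *)
Definition xcl u v (p : bool) := if p then 'i * ctanh v else - 'i * ccoth (u - v).
Definition ycl u v (p : bool) :=
  if p then - 'i / (ctanh (u - v) * ccosh v ^+ 2)
  else - 'i / (ccoth v * csinh (u - v) ^+ 2).
Definition scl u v := - 'i / (ccosh v * csinh (u - v)).

Definition xq u v (p : bool) := if p then 'i * ccoth v else - 'i * ctanh (u - v).
Definition yq u v (p : bool) :=
  if p then 'i / (ccoth (u - v) * csinh v ^+ 2)
  else 'i / (ctanh v * ccosh (u - v) ^+ 2).
Definition sq u v := 'i / (csinh v * ccosh (u - v)).

Lemma parity_jumps_cl u v :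
  csinh (u - v) != 0 -> ccosh (u - v) != 0 -> csinh v != 0 -> ccosh v != 0 ->
  parity_jumps (- ccosh u) (xcl u v) (ycl u v) (scl u v) (lam_cl u v).
Proof.
have eu : cexp u = cexp (u - v) * cexp v by rewrite -cexpD subrK.
rewrite !csinh_neq0 !ccosh_neq0.
rewrite /parity_jumps /xcl /ycl /scl /lam_cl /ctanh /ccoth !csinhE !ccoshE eu.
move: (cexp_neq0 v) (cexp_neq0 (u - v)); move: (cexp v) (cexp (u - v)).
by move=> E F hE hF h1 h2 h3 h4; split; field; rewrite ?hE ?hF ?h1 ?h2 ?h3 ?h4.
Qed.

Lemma parity_jumps_q u v :
  csinh (u - v) != 0 -> ccosh (u - v) != 0 -> csinh v != 0 -> ccosh v != 0 ->
  parity_jumps (ccosh u) (xq u v) (yq u v) (sq u v) (lam_q u v).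
Proof.
have eu : cexp u = cexp (u - v) * cexp v by rewrite -cexpD subrK.
rewrite !csinh_neq0 !ccosh_neq0.
rewrite /parity_jumps /xq /yq /sq /lam_q /ctanh /ccoth !csinhE !ccoshE eu.
move: (cexp_neq0 v) (cexp_neq0 (u - v)); move: (cexp v) (cexp (u - v)).
by move=> E F hE hF h1 h2 h3 h4; split; field; rewrite ?hE ?hF ?h1 ?h2 ?h3 ?h4.
Qed.

Lemma Mcl_entryE u v r c : Mcl_entry u v r.+1 c.+1 =
  if (c <= r)%N then profile (xcl u v) (ycl u v) (scl u v) (lam_cl u v) (r - c) (odd c)
  else 0.
Proof.
rewrite /Mcl_entry eqSS ltnS subSS /=.
case: ltngtP => [cr|//|<-].
- have : (0 < r - c)%N by rewrite subn_gt0.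
  case: (r - c)%N => // d _.
  by rewrite /profile /ycl /scl /=; case: (odd d); case: (odd c); rewrite /=; ring.
- by rewrite subnn; case: (odd c).
Qed.

Lemma Mq_entryE u v r c : Mq_entry u v r.+1 c.+1 =
  if (r <= c)%N then profile (xq u v) (yq u v) (sq u v) (lam_q u v) (c - r) (odd r)
  else 0.
Proof.
rewrite /Mq_entry eqSS ltnS subSS /=.
case: ltngtP => [rc|//|<-].
- have : (0 < c - r)%N by rewrite subn_gt0.
  case: (c - r)%N => // d _.
  by rewrite /profile /yq /sq /=; case: (odd d); case: (odd r); rewrite /=; ring.
- by rewrite subnn; case: (odd r).
Qed.

Lemma Mcl_profile N u v :
  Mcl N u v =
  lower_profile_mx (2 * N) (profile (xcl u v) (ycl u v) (scl u v) (lam_cl u v)).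
Proof. by apply/matrixP => a b; rewrite !mxE Mcl_entryE. Qed.

Lemma Mq_profile N u v :
  Mq N u v =
  (lower_profile_mx (2 * N) (profile (xq u v) (yq u v) (sq u v) (lam_q u v)))^T.
Proof. by apply/matrixP => a b; rewrite !mxE Mq_entryE. Qed.
End Hyperbolic.

Arguments parity_jumps_cl {R u v}.
Arguments parity_jumps_q {R u v}.

Theorem mainTheorem4 (R : realType) (N : nat) (u v w : R[i]) :
  csinh (u - v) != 0 -> ccosh (u - v) != 0 -> csinh v != 0 -> ccosh v != 0 ->
  csinh (u - w) != 0 -> ccosh (u - w) != 0 -> csinh w != 0 -> ccosh w != 0 ->
  (Mcl N u v *m Mcl N u w - Mcl N u w *m Mcl N u v = 0) /\
  (Mq N u v *m Mq N u w - Mq N u w *m Mq N u v = 0).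
Proof.
move=> suv cuv sv cv suw cuw sw cw.
have cl := pconv_profileC (parity_jumps_cl suv cuv sv cv)
                          (parity_jumps_cl suw cuw sw cw).
have q := pconv_profileC (parity_jumps_q suw cuw sw cw)
                         (parity_jumps_q suv cuv sv cv).
rewrite !Mcl_profile !Mq_profile -!trmx_mul.
by rewrite (lower_profile_mxC cl) (lower_profile_mxC q) !subrr.
Qed.
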